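(* Let $\mu$ be the Möbius function of the incidence algebra of the decomposition space $\mathbf C$ of layered finite posets, i.e. the convolution inverse of the zeta function $\zeta\equiv 1$ in the algebra of functions on isomorphism classes of finite posets with the convolution product described below. Then for every finite poset $P$, \[ \mu(P)=\begin{cases}(-1)^n & \text{if $P$ is a discrete poset (no two distinct elements comparable) with $n$ elements},\\ 0 & \text{otherwise.}\end{cases} \]
   Context: For $n\ge 0$ let $\underline n=\{1,\dots,n\}$ (with $\underline 0=\emptyset$). An $n$-layered finite poset is a finite poset $P$ with a monotone map $l:P\to\underline n$; its layers $P_i=l^{-1}(i)$ may be empty. The groupoid $\mathbf C_n$ has these as objects and poset isomorphisms commuting with the layerings as morphisms; these assemble into a simplicial groupoid $\mathbf C$ (inner face maps join adjacent layers, outer face maps delete the first/last layer, degeneracies insert empty layers), which is a decomposition space; $\mathbf C_1$ is the groupoid of finite posets. Taking homotopy cardinality of its incidence coalgebra, the incidence algebra of $\mathbf C$ is the $\mathbb Q$-vector space of functions $\varphi$ from isomorphism classes of finite posets to $\mathbb Q$ with convolution \[(\varphi*\psi)(P)=\sum_{l:P\to \underline 2\ \text{monotone}}\varphi(l^{-1}(1))\,\psi(l^{-1}(2)),\] where $l^{-1}(1),l^{-1}(2)$ carry the induced orders; the unit is $\delta(P)=1$ if $P=\emptyset$ and $0$ otherwise. The zeta function is $\zeta(P)=1$ for all $P$, and the Möbius function $\mu$ is its convolution inverse. *)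

From HB Require Import structures.
From mathcomp Require Import all_boot all_order all_algebra.
Unset Strict Implicit. Unset Printing Implicit Defensive.
Import GRing.Theory Num.Theory.
Local Open Scope ring_scope.

Definition is_poset (T : finType) (r : rel T) : Prop :=
  [/\ reflexive r, antisymmetric r & transitive r].

(* Elements of the incidence algebra: rational-valued functions on finite
   posets (their values on non-posets are irrelevant). *)
Definition poset_fun := forall T : finType, rel T -> rat.

(* Functions on isomorphism classes of finite posets. *)
Definition iso_invariant (phi : poset_fun) : Prop :=
  forall (T1 T2 : finType) (r1 : rel T1) (r2 : rel T2) (f : T1 -> T2),
    bijective f -> (forall x y, r1 x y = r2 (f x) (f y)) ->
    phi T1 r1 = phi T2 r2.

Definition sub_rel (T : finType) (r : rel T) (P : pred T) : rel {x : T | P x} :=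
  fun x y => r (val x) (val y).
Arguments sub_rel {T} r P.

(* Monotone layering l : P -> {1,2}, encoded with values in 'I_2 = {0,1}. *)
Definition monotone_layering (T : finType) (r : rel T) (l : {ffun T -> 'I_2}) : bool :=
  [forall x, forall y, r x y ==> (l x <= l y)%N].

(* Convolution: (phi * psi)(P) = sum over monotone l : P -> 2 of
   phi(l^-1(1)) psi(l^-1(2)). *)
Definition layer (T : finType) (l : {ffun T -> 'I_2}) (k : nat) : pred T :=
  fun x => (nat_of_ord (l x) == k)%N.

Definition conv (phi psi : poset_fun) (T : finType) (r : rel T) : rat :=
    \sum_(l : {ffun T -> 'I_2} | monotone_layering T r l)
      phi {x : T | layer T l 0 x} (sub_rel r (layer T l 0)) *
      psi {x : T | layer T l 1 x} (sub_rel r (layer T l 1)).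

Definition delta (T : finType) (r : rel T) : rat := if #|T| == 0%N then 1 else 0.

Definition zeta (T : finType) (r : rel T) : rat := 1.

Definition is_mobius (mu : poset_fun) : Prop :=
  (forall (T : finType) (r : rel T), is_poset T r -> conv mu zeta T r = delta T r) /\
  (forall (T : finType) (r : rel T), is_poset T r -> conv zeta mu T r = delta T r).

Definition discrete (T : finType) (r : rel T) : bool :=
  [forall x, forall y, r x y ==> (x == y)].

(* The candidate [discrete_sign] (P |-> (-1)^|P| on discrete posets, 0 otherwise)
   is a two-sided inverse of zeta: a monotone layering whose lower layer is
   discrete is the same thing as a set S of minimal elements of P (S is then
   automatically a down-set), so (discrete_sign * zeta)(P) is the alternating sum
   over the subsets of the minimal elements of P, which vanishes unless P, and
   hence its set of minimal elements, is empty.  The right-hand identity is the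
   left one for the opposite order.  Conversely, the inverse of zeta is unique:
   in (mu * zeta)(P) every layering but the one putting all of P in the lower
   layer only involves mu on strictly smaller posets, so mu is determined by
   strong induction on |P|. *)

From HB Require Import structures.
From mathcomp Require Import all_boot all_order all_algebra.
Import GRing.Theory Num.Theory.
Local Open Scope ring_scope.

Definition discrete_sign : poset_fun :=
  fun T r => if discrete T r then (-1) ^+ #|T| else 0.

Definition discrete_on (T : finType) (r : rel T) (A : pred T) : bool :=
  [forall x, forall y, [&& A x, A y & r x y] ==> (x == y)].

Definition dual_rel (T : finType) (r : rel T) : rel T := fun x y => r y x.

Definition minimal_set (T : finType) (r : rel T) : {set T} :=
  [set x | [forall y, r y x ==> (y == x)]].

Definition lower_set (T : finType) (l : {ffun T -> 'I_2}) : {set T} :=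
  [set x | layer T l 0 x].

Arguments discrete_on {T}.
Arguments dual_rel {T}.
Arguments minimal_set {T}.
Arguments lower_set {T}.

Set Implicit Arguments.
Unset Strict Implicit.

Section Posets.

Variables (T : finType) (r : rel T).

Lemma is_poset_sub (A : pred T) : is_poset T r -> is_poset _ (sub_rel r A).
Proof.
case=> r_refl r_anti r_trans; split=> [x | x y /r_anti/val_inj // | y x z].
  exact: r_refl.
exact: r_trans.
Qed.

Lemma is_poset_dual : is_poset T r -> is_poset T (dual_rel r).
Proof.
case=> r_refl r_anti r_trans; split=> [x | x y | y x z rxy ryz].
- exact: r_refl.
- by rewrite andbC => /r_anti.
- exact: r_trans ryz rxy.
Qed.

Lemma minimal_set_neq0 (x : T) : is_poset T r -> minimal_set r != set0.
Proof.
case=> r_refl r_anti r_trans; apply/set0Pn.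
have [m _ m_min] := arg_minnP (fun x => #|[set y | r y x]|) (isT : predT x).
exists m; rewrite inE; apply/forallP => y; apply/implyP => rym; apply: contraT => y_neq_m.
have : (#|[set z | r z y]| < #|[set z | r z m]|)%N.
  apply/proper_card/properP; split.
    by apply/subsetP => z; rewrite !inE => rzy; apply: r_trans rym.
  exists m; rewrite !inE ?r_refl //; apply: contra y_neq_m => rmy.
  by rewrite (r_anti y m) ?rym.
by rewrite ltnNge m_min.
Qed.

Lemma minimal_set_eq0 : is_poset T r -> (minimal_set r == set0) = (#|T| == 0%N).
Proof.
move=> r_poset; have [x _ | T0] := pickP (@predT T).
  rewrite (negbTE (minimal_set_neq0 x r_poset)); apply/esym/negbTE.
  by rewrite -lt0n; apply/card_gt0P; exists x.
by rewrite (eq_card0 T0) eqxx; apply/eqP/setP => y; have := T0 y.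
Qed.

Lemma discrete_sub_rel (A : pred T) : discrete _ (sub_rel r A) = discrete_on r A.
Proof.
apply/forallP/forallP => [disc x | disc x]; apply/forallP => y; apply/implyP.
  case/and3P=> Ax Ay rxy.
  by have /forallP/(_ (exist _ y Ay))/implyP/(_ rxy)/eqP[->] := disc (exist _ x Ax).
move=> rxy; have /forallP/(_ (val y))/implyP := disc (val x).
by rewrite (valP x) (valP y) => /(_ rxy).
Qed.

Lemma discrete_sign_sub (A : pred T) :
  discrete_sign _ (sub_rel r A) = if discrete_on r A then (-1) ^+ #|A| else 0.
Proof. by rewrite /discrete_sign discrete_sub_rel card_sig. Qed.

Lemma discrete_sign_dual : discrete_sign T (dual_rel r) = discrete_sign T r.
Proof.
rewrite /discrete_sign; congr (if _ then _ else _).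
by apply/forallP/forallP => disc x; apply/forallP => y; rewrite eq_sym;
  have /forallP := disc y; apply.
Qed.

End Posets.

Lemma sum_subset_sign (R : numDomainType) (T : finType) (M : {set T}) :
  \sum_(S : {set T} | S \subset M) (-1) ^+ #|S| = (if M == set0 then 1 else 0) :> R.
Proof.
have [->|[m Mm]] := set_0Vmem M.
  by rewrite eqxx (big_pred1 set0) ?cards0 // => S; rewrite subset0.
have /negbTE -> : M != set0 by apply/set0Pn; exists m.
pose toggle (S : {set T}) := if m \in S then S :\ m else m |: S.
have toggleK : involutive toggle.
  by move=> S; rewrite /toggle; have [mS | mS] := boolP (m \in S);
    rewrite ?setD11 ?setD1K ?setU11 ?setU1K.
set s := \sum_(S | _) _; suff s_opp : s = - s.
  by apply/eqP; rewrite -[s == 0]orFb -(mulrn_eq0 s 2) mulr2n {2}s_opp subrr.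
rewrite {1}/s (reindex_inj (inv_inj toggleK)) -sumrN /=.
apply: eq_big => S; rewrite /toggle; case: ifPn => mS.
- by rewrite -{2}(setD1K mS) subUset sub1set Mm.
- by rewrite subUset sub1set Mm.
- by rewrite (cardsD1 m S) mS exprS mulN1r opprK.
- by rewrite cardsU1 mS exprS mulN1r.
Qed.

Lemma iso_invariant_sub_eq (phi : poset_fun) (T : finType) (r : rel T) (A B : pred T) :
  iso_invariant phi -> A =1 B -> phi _ (sub_rel r A) = phi _ (sub_rel r B).
Proof.
move=> phi_iso eqAB.
have AB x : A x -> B x by rewrite eqAB.
have BA x : B x -> A x by rewrite eqAB.
apply: (phi_iso _ _ _ _ (fun x : {x | A x} => exist B (val x) (AB _ (valP x)))) => //.
by exists (fun x => exist _ (val x) (BA _ (valP x))) => x; apply: val_inj.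
Qed.

Lemma iso_invariant_sub_full (phi : poset_fun) (T : finType) (r : rel T) (A : pred T) :
  iso_invariant phi -> (forall x, A x) -> phi _ (sub_rel r A) = phi T r.
Proof.
move=> phi_iso Afull; apply: (phi_iso _ _ _ _ val) => //.
by exists (fun x => exist _ x (Afull x)) => // x; apply: val_inj.
Qed.

Lemma iso_invariant_discrete_sign : iso_invariant discrete_sign.
Proof.
move=> T1 T2 r1 r2 f f_bij f_hom; rewrite /discrete_sign (bij_eq_card f_bij).
have [g fK gK] := f_bij.
congr (if _ then _ else _); apply/forallP/forallP => disc x.
  apply/forallP => y; rewrite -(gK x) -(gK y) -f_hom (inj_eq (can_inj fK)).
  exact: (forallP (disc (g x))).
apply/forallP => y; rewrite f_hom -(inj_eq (can_inj fK)).
exact: (forallP (disc (f x))).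
Qed.

Section Layerings.

Variables (T : finType) (r : rel T).
Hypothesis r_poset : is_poset T r.

Lemma monotone_discrete_lower (l : {ffun T -> 'I_2}) :
  monotone_layering T r l && discrete_on r (layer T l 0) =
  (lower_set l \subset minimal_set r).
Proof.
have layer0P x : reflect (l x = ord0) (layer T l 0 x).
  by apply: (iffP eqP) => [lx0 | -> //]; apply: val_inj.
apply/andP/subsetP => [[/forallP mono /forallP disc] x | low_min].
  rewrite !inE => /layer0P lx0; apply/forallP => y; apply/implyP => ryx.
  have /forallP/(_ x)/implyP/(_ ryx) := mono y; rewrite lx0 leqn0 => ly0.
  by have /forallP/(_ x)/implyP := disc y; apply; rewrite /layer ly0 lx0 ryx.
have minP y : layer T l 0 y -> forall x, r x y -> x = y.
  move=> ly0 x rxy; have := low_min y; rewrite !inE => /(_ ly0) /forallP.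
  by move=> /(_ x) /implyP /(_ rxy) /eqP.
split; apply/forallP => x; apply/forallP => y; apply/implyP.
  move=> rxy; have [/minP/(_ x rxy) -> //|] := boolP (layer T l 0 y).
  by rewrite /layer; case: (l x) (l y) => [[|[|?]] ?] [[|[|?]] ?].
by case/and3P=> _ /minP min_y /min_y ->.
Qed.

Lemma sum_discrete_sign_lower :
  \sum_(l | monotone_layering T r l) discrete_sign _ (sub_rel r (layer T l 0))
  = delta T r.
Proof.
pose of_set (S : {set T}) : {ffun T -> 'I_2} :=
  [ffun x => if x \in S then ord0 else ord_max].
have of_setK S : lower_set (of_set S) = S.
  by apply/setP => x; rewrite inE /layer ffunE; case: (x \in S).
have of_set_bij : {on predT, bijective of_set}.
  apply: onW_bij; exists lower_set => // l; apply/ffunP => x.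
  by rewrite ffunE inE /layer; case: (l x) => [[|[|?]] ?]; apply: val_inj.
rewrite /delta -(minimal_set_eq0 r_poset) -sum_subset_sign big_mkcond /=.
rewrite (reindex of_set of_set_bij) [RHS]big_mkcond; apply: eq_bigr => S _.
rewrite discrete_sign_sub -if_and monotone_discrete_lower of_setK.
by congr (if _ then _ ^+ _ else _); apply: eq_card => x; rewrite -[in RHS](of_setK S) inE.
Qed.

End Layerings.

Lemma sum_discrete_sign_upper (T : finType) (r : rel T) : is_poset T r ->
  \sum_(l | monotone_layering T r l) discrete_sign _ (sub_rel r (layer T l 1))
  = delta T r.
Proof.
move=> r_poset; rewrite -[RHS](sum_discrete_sign_lower (is_poset_dual r_poset)).
pose flip (l : {ffun T -> 'I_2}) : {ffun T -> 'I_2} := [ffun x => rev_ord (l x)].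
have flipK : involutive flip by move=> l; apply/ffunP => x; rewrite !ffunE rev_ordK.
rewrite [RHS](reindex flip); last by apply: onW_bij; exists flip.
apply: eq_big => l.
  apply/forallP/forallP => mono x; apply/forallP => y; have /forallP/(_ x) := mono y;
  by rewrite /dual_rel !ffunE; case: (l x) (l y) => [[|[|?]] ?] [[|[|?]] ?].
(* [dual_rel (sub_rel (dual_rel r) A)] is convertible to [sub_rel r A]. *)
move=> _; rewrite -[in RHS]discrete_sign_dual.
apply: iso_invariant_sub_eq iso_invariant_discrete_sign _ => x.
by rewrite /layer ffunE; case: (l x) => [[|[|?]] ?].
Qed.

Lemma discrete_sign_is_mobius : is_mobius discrete_sign.
Proof.
split=> T r r_poset; rewrite /conv /zeta.
  by rewrite -(sum_discrete_sign_lower r_poset); apply: eq_bigr => l _; rewrite mulr1.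
by rewrite -(sum_discrete_sign_upper r_poset); apply: eq_bigr => l _; rewrite mul1r.
Qed.

Lemma is_mobius_congr (mu nu : poset_fun) :
  (forall (T : finType) (r : rel T), is_poset T r -> mu T r = nu T r) ->
  is_mobius mu -> is_mobius nu.
Proof.
move=> eq_mu_nu [mu_l mu_r]; split=> T r r_poset; [rewrite -mu_l // | rewrite -mu_r //];
  by apply: eq_bigr => l _; rewrite eq_mu_nu //; apply: is_poset_sub.
Qed.

Lemma card_lower_layer_lt (T : finType) (l : {ffun T -> 'I_2}) :
  l != [ffun=> ord0] -> (#|{: {x | layer T l 0 x}}| < #|T|)%N.
Proof.
move=> l_neq0; rewrite card_sig -(cardC (layer T l 0)) -[X in (X < _)%N]addn0 ltn_add2l.
have /existsP[x lx] : [exists x, ~~ layer T l 0 x].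
  apply: contraR l_neq0 => /existsPn low; apply/eqP/ffunP => x.
  by have := low x; rewrite negbK ffunE => /eqP l0; apply: val_inj.
by apply/card_gt0P; exists x.
Qed.

Lemma eq_on_posets_conv_zeta (mu nu : poset_fun) :
  iso_invariant mu -> iso_invariant nu ->
  (forall (T : finType) (r : rel T), is_poset T r -> conv mu zeta T r = conv nu zeta T r) ->
  forall (T : finType) (r : rel T), is_poset T r -> mu T r = nu T r.
Proof.
move=> mu_iso nu_iso eq_conv T r; move Tn: #|T| => n.
elim/ltn_ind: n T r Tn => n IH T r Tn r_poset.
pose l0 : {ffun T -> 'I_2} := [ffun=> ord0].
have l0_mono : monotone_layering T r l0.
  by apply/forallP => x; apply/forallP => y; rewrite !ffunE implybT.
have l0_full x : layer T l0 0 x by rewrite /layer ffunE.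
have := eq_conv T r r_poset; rewrite /conv /zeta !(bigD1 l0 l0_mono) /=.
rewrite (iso_invariant_sub_full _ mu_iso l0_full).
rewrite (iso_invariant_sub_full _ nu_iso l0_full).
rewrite (eq_bigr (fun l => nu _ (sub_rel r (layer T l 0)) * 1)) => [/addIr|l].
  by rewrite !mulr1.
case/andP=> _ l_neq0; rewrite (IH _ _ _ _ erefl) //.
  by rewrite -Tn; apply: card_lower_layer_lt.
exact: is_poset_sub.
Qed.

Theorem theorem3p4 (mu : poset_fun) :
  iso_invariant mu ->
  (is_mobius mu <->
   (forall (T : finType) (r : rel T), is_poset T r ->
      mu T r = (if discrete T r then (-1) ^+ #|T| else 0))).
Proof.
move=> mu_iso; split=> [[mu_l _] | mu_eq].
  apply: (eq_on_posets_conv_zeta mu_iso iso_invariant_discrete_sign) => T r r_poset.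
  by rewrite mu_l // discrete_sign_is_mobius.1.
by apply: is_mobius_congr discrete_sign_is_mobius => T r /mu_eq.
Qed.
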